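(* Suppose $p\in\mathbb{C}[z_1,z_2]$ is semi-stable. Then all common zeros of $p$ and $\tilde p$ in $\mathbb{C}_\infty\times\mathbb{C}_\infty$ lie in $(\mathbb{D}\times\mathbb{D}^{-1})\cup\mathbb{T}^2\cup(\mathbb{D}^{-1}\times\mathbb{D})$.
   Context: $\mathbb{D}$ is the open unit disk, $\mathbb{T}$ the unit circle, $\mathbb{C}_\infty=\mathbb{C}\cup\{\infty\}$, $\mathbb{D}^{-1}=\{z\in\mathbb{C}:|z|>1\}\cup\{\infty\}$. For $p$ of bidegree $(n,m)$, $\tilde p(z)=z_1^nz_2^m\overline{p(1/\bar z_1,1/\bar z_2)}$; $p$ is semi-stable if it has no zeros in $\mathbb{D}^2$ and $p,\tilde p$ have no common factor. Zeros at infinity for a polynomial $f$ of bidegree $(n,m)$: $f(a,\infty)=0$ means $z_2^mf(a,1/z_2)$ vanishes at $z_2=0$; $f(\infty,b)=0$ means $z_1^nf(1/z_1,b)$ vanishes at $z_1=0$; $f(\infty,\infty)=0$ means $z_1^nz_2^mf(1/z_1,1/z_2)$ vanishes at $(0,0)$. *)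

From HB Require Import structures.
From mathcomp Require Import all_boot all_order all_algebra.
From mathcomp Require Import complex.
From mathcomp Require Import reals.
Set Implicit Arguments. Unset Strict Implicit. Unset Printing Implicit Defensive.
Import Order.TTheory GRing.Theory Num.Theory.
Local Open Scope ring_scope.
Local Open Scope complex_scope.

(* Bivariate polynomials in C[z1,z2] are represented as {poly {poly C}}:
   the outer variable is z2, the inner one is z1.
   coef2 p i j = coefficient of z1^i z2^j. *)
Section Bivariate.
Variable R : realType.
Local Notation C := (R[i]).

Definition coef2 (p : {poly {poly C}}) (i j : nat) : C := (p`_j)`_i.

Definition mk2 (n m : nat) (c : nat -> nat -> C) : {poly {poly C}} :=
  \poly_(j < m.+1) \poly_(i < n.+1) c i j.

Definition eval2 (p : {poly {poly C}}) (a b : C) : C := (p.[b%:P]).[a].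

Definition deg1 (p : {poly {poly C}}) : nat :=
  (\max_(j < size p) (size (p`_j)%R).-1)%N.
Definition deg2 (p : {poly {poly C}}) : nat := (size p).-1.

Definition has_bidegree (p : {poly {poly C}}) (n m : nat) : Prop :=
  p != 0 /\ deg1 p = n /\ deg2 p = m.

(* reflection  tilde p (z) = z1^n z2^m conj(p(1/conj z1, 1/conj z2)) *)
Definition refl (n m : nat) (p : {poly {poly C}}) : {poly {poly C}} :=
  mk2 n m (fun i j => (coef2 p (n - i) (m - j))^*).

Definition rev1 (n m : nat) (f : {poly {poly C}}) : {poly {poly C}} :=
  mk2 n m (fun i j => coef2 f (n - i) j).
Definition rev2 (n m : nat) (f : {poly {poly C}}) : {poly {poly C}} :=
  mk2 n m (fun i j => coef2 f i (m - j)).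

(* Points of C_oo: None stands for infinity. *)
Definition ext_eval (n m : nat) (f : {poly {poly C}}) (x y : option C) : C :=
  match x, y with
  | Some a, Some b => eval2 f a b
  | None, Some b => eval2 (rev1 n m f) 0 b
  | Some a, None => eval2 (rev2 n m f) a 0
  | None, None => eval2 (rev1 n m (rev2 n m f)) 0 0
  end.

Definition in_D (x : option C) : Prop :=
  if x is Some a then `|a| < 1 else False.
Definition in_T (x : option C) : Prop :=
  if x is Some a then `|a| = 1 else False.
Definition in_Dinv (x : option C) : Prop :=
  if x is Some a then 1 < `|a| else True.

Definition no_common_factor (p q : {poly {poly C}}) : Prop :=
  forall d r s : {poly {poly C}}, p = d * r -> q = d * s ->
    exists c : C, d = c%:P%:P.

Definition semi_stable (n m : nat) (p : {poly {poly C}}) : Prop :=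
  has_bidegree p n m /\
  (forall a b : C, `|a| < 1 -> `|b| < 1 -> eval2 p a b != 0) /\
  no_common_factor p (refl n m p).
End Bivariate.

From HB Require Import structures.
From mathcomp Require Import all_boot all_order all_algebra.
From mathcomp Require Import complex.
From mathcomp Require Import reals.
From mathcomp Require Import ring.
Import Order.TTheory GRing.Theory Num.Theory.
Local Open Scope ring_scope.
Local Open Scope complex_scope.

(* A zero of p in the closed bidisk lies on T^2.  There is none in D^2; and if
   p(a, b) = 0 with |a| = 1 > |b|, Hurwitz's theorem applied to the polynomials
   p(t a, .), t < 1, which have no zeros in the unit disk, shows that p(a, .)
   vanishes identically.  Then z1 - a divides p, and also p~ because
   p~(a, .) = a^n conj(p(a, .)) when |a| = 1, against the absence of a common
   factor; the case |b| = 1 > |a| is symmetric.  Common zeros with both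
   coordinates outside D are handled by the reflection identity
   p~(x, y) = x^n y^m conj(p(1/conj x, 1/conj y)), valid in homogeneous
   coordinates also at infinity (with 1/conj oo = 0): it turns them into zeros
   of p in the closed bidisk. *)

Section Analytic.
Context {R : realType}.
Local Notation C := R[i].

Lemma norm_exprB1_le (t : C) i : 0 <= t -> t <= 1 ->
  `|t ^+ i - 1| <= (1 - t) * i%:R.
Proof.
move=> t_ge0 t_le1; elim: i => [|i IH]; first by rewrite expr0 subrr normr0 mulr0.
have -> : t ^+ i.+1 - 1 = t * (t ^+ i - 1) + (t - 1) by rewrite exprS; ring.
apply: (le_trans (ler_normD _ _)).
rewrite normrM (ger0_norm t_ge0) [`|t - 1|]distrC (@ger0_norm _ (1 - t)) ?subr_ge0 //.
rewrite -nat1r mulrDr mulr1 addrC lerD2l.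
by apply: le_trans (ler_wpM2r (normr_ge0 _) t_le1) _; rewrite mul1r.
Qed.

Lemma exists_small_pos (A u : C) : 0 <= A -> 0 < u ->
  exists s, [/\ 0 < s, s < 1 & s * A < u].
Proof.
move=> A_ge0 u_gt0.
have K_gt0 : 0 < A + u + 1 := ltr_pwDr ltr01 (addr_ge0 A_ge0 (ltW u_gt0)).
exists (u / (A + u + 1)); split.
- by rewrite divr_gt0.
- by rewrite ltr_pdivrMr // mul1r -addrA ltr_wpDl // ltrDl ltr01.
- by rewrite mulrAC ltr_pdivrMr // ltr_pM2l // -addrA ltrDl addr_gt0 ?ltr01.
Qed.

Lemma root_free_coef_bound (rho : C) N (f : {poly C}) :
  0 < rho -> (size f <= N)%N -> f`_0 != 0 ->
  (forall w, root f w -> rho <= `|w|) ->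
  forall k, `|f`_k| * rho ^+ k <= 2%:R ^+ N * `|f`_0|.
Proof.
move=> rho_gt0; elim: N f => [|N IH] f size_f f0_neq0 root_far k.
  by move: size_f f0_neq0; rewrite leqn0 size_poly_eq0 => /eqP ->; rewrite coef0 eqxx.
have f0_le : `|f`_0| <= 2%:R ^+ N.+1 * `|f`_0|.
  by rewrite ler_peMl ?normr_ge0 // exprn_ege1 // ler1n.
case: k => [|k]; first by rewrite expr0 mulr1.
have [size_f1|size_f1] := leqP (size f) 1.
  by rewrite nth_default ?normr0 ?mul0r ?(le_trans _ f0_le) // (leq_trans size_f1).
have /closed_rootP [w root_w] : size f != 1%N by rewrite neq_ltn size_f1 orbT.
have [g f_eq] := factor_theorem _ _ root_w.
have w_ge : rho <= `|w| := root_far w root_w.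
have coef_f j : f`_j = (if j is j'.+1 then g`_j' else 0) - g`_j * w.
  by rewrite f_eq mulrBr coefB coefMX coefMC; case: j.
have g0_neq0 : g`_0 != 0.
  by apply: contraNneq f0_neq0; rewrite coef_f => ->; rewrite mul0r subr0.
have gk_le j : `|g`_j| * rho ^+ j <= 2%:R ^+ N * `|g`_0|.
  apply: (IH g _ g0_neq0).
    rewrite -ltnS (leq_trans _ size_f) // f_eq size_Mmonic ?monicXsubC //.
      by rewrite size_XsubC addn2.
    by apply: contraNneq f0_neq0 => g0; rewrite f_eq g0 mul0r coef0.
  by move=> v /eqP gv; apply: root_far; rewrite f_eq rootE hornerM gv mul0r.
rewrite [f`_k.+1]coef_f [f`_0]coef_f sub0r normrN normrM.
apply: (le_trans (ler_wpM2r (exprn_ge0 _ (ltW rho_gt0)) (ler_normB _ _))).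
rewrite mulrDl normrM exprS mulrCA (mulrC _ `|w|) -(mulrA `|w|) -exprS.
have -> : 2%:R ^+ N.+1 * (`|g`_0| * `|w|) = `|w| * (2%:R ^+ N * `|g`_0|) *+ 2.
  by rewrite exprS -mulr_natl; ring.
rewrite mulr2n lerD // ?ler_wpM2l ?normr_ge0 //.
by rewrite ler_pM ?mulr_ge0 ?exprn_ge0 ?normr_ge0 ?(ltW rho_gt0).
Qed.

Section PolyFamily.
Variables (N : nat) (B : nat -> {poly C}).

Definition polyfam (t : C) : {poly C} := \sum_(i < N) t ^+ i *: B i.

Lemma coef_polyfam t k : (polyfam t)`_k = \sum_(i < N) t ^+ i * (B i)`_k.
Proof. by rewrite coef_sum; apply: eq_bigr => i _; rewrite coefZ. Qed.

Lemma size_polyfam t : (size (polyfam t) <= \max_(i < N) size (B i))%N.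
Proof.
apply: leq_trans (size_sum _ _ _) _; apply/bigmax_leqP => i _.
exact: leq_trans (size_scale_leq _ _) (leq_bigmax i).
Qed.

Lemma polyfam_coef_near1 t k : 0 <= t -> t <= 1 ->
  `|(polyfam t)`_k - (polyfam 1)`_k| <= (1 - t) * \sum_(i < N) i%:R * `|(B i)`_k|.
Proof.
move=> t_ge0 t_le1; rewrite !coef_polyfam -sumrB mulr_sumr.
apply: le_trans (ler_norm_sum _ _ _) (ler_sum _ _) => i _.
rewrite expr1n -mulrBl normrM mulrA ler_wpM2r ?normr_ge0 //.
exact: norm_exprB1_le.
Qed.

(* If polyfam 1 <> 0 vanished at 0, its constant coefficient would be 0 but not
   its top one; for t close to 1, root_free_coef_bound bounds the latter for
   polyfam t by the (small) constant coefficient of polyfam t. *)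
Lemma polyfam1_eq0_root0 (rho : C) : 0 < rho ->
  (forall t w, 0 <= t -> t < 1 -> root (polyfam t) w -> rho <= `|w|) ->
  root (polyfam 1) 0 -> polyfam 1 = 0.
Proof.
move=> rho_gt0 root_far; rewrite rootE horner_coef0 => /eqP s1_0.
apply/eqP/negPn/negP => s1_neq0.
set k := (size (polyfam 1)).-1; set eps := `|(polyfam 1)`_k|.
set K := (\max_(i < N) size (B i))%N.
pose M j := \sum_(i < N) i%:R * `|(B i)`_j|.
have eps_gt0 : 0 < eps by rewrite normr_gt0 -lead_coefE lead_coef_eq0.
have M_ge0 j : 0 <= M j by apply: sumr_ge0 => i _; rewrite mulr_ge0 ?ler0n.
have rhok_ge0 : 0 <= rho ^+ k by rewrite exprn_ge0 ?ltW.
have [s [s_gt0 s_lt1 s_small]] := @exists_small_pos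
  (2%:R ^+ K * M 0%N + M k * rho ^+ k) (eps * rho ^+ k)
  (addr_ge0 (mulr_ge0 (exprn_ge0 _ (ler0n _ 2)) (M_ge0 _)) (mulr_ge0 (M_ge0 _) rhok_ge0))
  (mulr_gt0 eps_gt0 (exprn_gt0 _ rho_gt0)).
pose t := 1 - s.
have t_ge0 : 0 <= t by rewrite subr_ge0 ltW.
have t_lt1 : t < 1 by rewrite ltrBlDr ltrDl.
have near j : `|(polyfam t)`_j - (polyfam 1)`_j| <= s * M j.
  by rewrite -[s in s * _](subKr 1) polyfam_coef_near1 // ltW.
have st0_neq0 : (polyfam t)`_0 != 0.
  apply/eqP => st0; have := root_far t 0 t_ge0 t_lt1.
  by rewrite rootE horner_coef0 st0 eqxx normr0 lt_geF // => /(_ isT).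
have bound := root_free_coef_bound _ _ _ rho_gt0 (size_polyfam t) st0_neq0
  (fun w => root_far t w t_ge0 t_lt1) k.
have st0_le : `|(polyfam t)`_0| <= s * M 0%N by move: (near 0%N); rewrite s1_0 subr0.
have eps_le : eps <= `|(polyfam t)`_k| + s * M k.
  by rewrite -lerBlDl (le_trans (lerB_dist _ _)) // distrC near.
have : eps * rho ^+ k < eps * rho ^+ k.
  apply: le_lt_trans s_small; rewrite mulrDr.
  apply: le_trans (ler_wpM2r rhok_ge0 eps_le) _; rewrite mulrDl lerD //.
    by apply: le_trans bound _; rewrite mulrCA ler_wpM2l ?exprn_ge0 ?ler0n.
  by rewrite mulrA.
by rewrite ltxx.
Qed.

End PolyFamily.

Lemma polyfam_comp N (B : nat -> {poly C}) q t :
  polyfam N (fun i => B i \Po q) t = polyfam N B t \Po q.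
Proof. by rewrite /polyfam linear_sum; apply: eq_bigr => i _; rewrite linearZ. Qed.

Lemma polyfam1_eq0 N (B : nat -> {poly C}) (rho b : C) : 0 < rho ->
  (forall t w, 0 <= t -> t < 1 -> root (polyfam N B t) w -> rho <= `|w - b|) ->
  root (polyfam N B 1) b -> polyfam N B 1 = 0.
Proof.
move=> rho_gt0 root_far root1.
pose shift := 'X + b%:P.
have root_shift t w : root (polyfam N B t \Po shift) w = root (polyfam N B t) (w + b).
  by rewrite /root horner_comp !hornerE.
apply/eqP; rewrite -(comp_poly_eq0 _ (_ : 1 < size shift)%N) ?size_XaddC //.
rewrite -polyfam_comp; apply/eqP; apply: (polyfam1_eq0_root0 _ _ _ rho_gt0).
  move=> t w t_ge0 t_lt1; rewrite polyfam_comp root_shift.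
  by move/(root_far t _ t_ge0 t_lt1); rewrite addrK.
by rewrite polyfam_comp root_shift add0r.
Qed.

End Analytic.

Section Bivariate.
Context {R : realType}.
Local Notation C := R[i].
Implicit Types (p q : {poly {poly C}}) (f : nat -> nat -> C) (u v : nat -> C).
Implicit Types (a b : C) (x y : option C).

Definition bisum n m f u v : C :=
  \sum_(j < m.+1) (\sum_(i < n.+1) f i j * u i) * v j.

Lemma bisum_swap n m f u v : bisum m n (fun j i => f i j) v u = bisum n m f u v.
Proof.
rewrite /bisum; under eq_bigr do rewrite mulr_suml.
under [RHS]eq_bigr do rewrite mulr_suml.
by rewrite exchange_big /=; apply: eq_bigr => i _; apply: eq_bigr => j _; ring.
Qed.

Lemma coef_mk2 n m f j :
  (mk2 n m f)`_j = if (j < m.+1)%N then \poly_(i < n.+1) f i j else 0.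
Proof. exact: coef_poly. Qed.

Lemma coef2_mk2 n m f i j :
  coef2 (mk2 n m f) i j = if (i < n.+1)%N && (j < m.+1)%N then f i j else 0.
Proof. by rewrite /coef2 coef_mk2; case: ifP; rewrite ?coef_poly ?coef0 ?andbT ?andbF. Qed.

Lemma mk2_coef2 {n m p} : has_bidegree p n m -> p = mk2 n m (coef2 p).
Proof.
move=> [p_neq0 [deg1_p deg2_p]].
have size_p : size p = m.+1 by rewrite -deg2_p /deg2 prednK // lt0n size_poly_eq0.
apply/polyP => j; rewrite coef_mk2; case: ltnP => [j_lt|j_ge]; last first.
  by rewrite nth_default // size_p.
apply/polyP => i; rewrite coef_poly; case: ltnP => // i_ge.
have j_lt' : (j < size p)%N by rewrite size_p.
apply: nth_default; apply: leq_trans (leqSpred _) (leq_trans _ i_ge).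
rewrite ltnS -deg1_p.
exact: (leq_bigmax (F := fun k : 'I_(size p) => (size p`_k).-1) (Ordinal j_lt')).
Qed.

Lemma eval2_mk2 n m f a b :
  eval2 (mk2 n m f) a b = bisum n m f (GRing.exp a) (GRing.exp b).
Proof.
rewrite /eval2 /mk2 horner_poly horner_sum; apply: eq_bigr => j _.
by rewrite hornerM horner_poly horner_exp hornerC.
Qed.

Lemma eval2_mk2_swap n m f a b :
  eval2 (mk2 m n (fun j i => f i j)) b a = eval2 (mk2 n m f) a b.
Proof. by rewrite !eval2_mk2 bisum_swap. Qed.

Lemma root_coef_mk2 n m f j a :
  root (mk2 n m f)`_j a = (j < m.+1)%N ==> (\sum_(i < n.+1) f i j * a ^+ i == 0).
Proof. by rewrite coef_mk2 rootE; case: ifP; rewrite ?horner_poly ?horner0 ?eqxx. Qed.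

Lemma horner_mk2C n m f b :
  (mk2 n m f).[b%:P] = \poly_(i < n.+1) \sum_(j < m.+1) f i j * b ^+ j.
Proof.
apply/polyP => i; rewrite coef_poly /mk2 horner_poly coef_sum.
under eq_bigr do rewrite -rmorphXn coefMC coef_poly.
by case: ifP => // _; rewrite big1 // => j _; rewrite mul0r.
Qed.

Definition zero_free_bidisk p : Prop :=
  forall z w : C, `|z| < 1 -> `|w| < 1 -> eval2 p z w != 0.

Lemma zero_free_line_z1 {n m f} a b : zero_free_bidisk (mk2 n m f) ->
  `|a| = 1 -> `|b| < 1 -> eval2 (mk2 n m f) a b = 0 ->
  forall j, root (mk2 n m f)`_j a.
Proof.
move=> zero_free a_norm b_lt1 zero_ab.
pose B i := \poly_(j < m.+1) (f i j * a ^+ i).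
have eval_fam t w : (polyfam n.+1 B t).[w] = eval2 (mk2 n m f) (t * a) w.
  rewrite eval2_mk2 /polyfam /bisum horner_sum.
  under eq_bigr do rewrite hornerZ horner_poly mulr_sumr.
  rewrite exchange_big /=; apply: eq_bigr => j _; rewrite mulr_suml.
  by apply: eq_bigr => i _; rewrite exprMn; ring.
have fam1_eq0 : polyfam n.+1 B 1 = 0.
  apply: (polyfam1_eq0 _ _ (1 - `|b|) b); first by rewrite subr_gt0.
    move=> t w t_ge0 t_lt1; rewrite rootE eval_fam => /eqP zero_tw.
    have ta_lt1 : `|t * a| < 1 by rewrite normrM a_norm mulr1 ger0_norm.
    have w_ge1 : 1 <= `|w|.
      rewrite real_leNgt ?real1 ?normr_real //; apply/negP => w_lt1.
      by move: (zero_free _ _ ta_lt1 w_lt1); rewrite zero_tw eqxx.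
    rewrite lerBlDr (le_trans w_ge1) // -{1}(subrK b w).
    exact: ler_normD.
  by rewrite rootE eval_fam mul1r zero_ab.
move=> j; rewrite root_coef_mk2; apply/implyP => j_lt.
apply/eqP; rewrite -[RHS](coef0 _ j) -fam1_eq0 coef_polyfam.
by apply: eq_bigr => i _; rewrite coef_poly j_lt expr1n mul1r.
Qed.

Lemma zero_free_line_z2 {n m f} a b : zero_free_bidisk (mk2 n m f) ->
  `|a| < 1 -> `|b| = 1 -> eval2 (mk2 n m f) a b = 0 -> (mk2 n m f).[b%:P] = 0.
Proof.
move=> zero_free a_lt1 b_norm zero_ab.
have zero_free_swap : zero_free_bidisk (mk2 m n (fun j i => f i j)).
  by move=> z w z_lt1 w_lt1; rewrite eval2_mk2_swap zero_free.
have := zero_free_line_z1 b a zero_free_swap b_norm a_lt1.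
rewrite eval2_mk2_swap => /(_ zero_ab) line.
rewrite horner_mk2C; apply/polyP => i; rewrite coef_poly coef0.
case: ifP => // i_lt; apply/eqP.
by have := line i; rewrite root_coef_mk2 i_lt.
Qed.

Lemma no_common_line_z1 {p q a} : no_common_factor p q ->
  (forall j, root p`_j a) -> (forall j, root q`_j a) -> False.
Proof.
have factor (r : {poly {poly C}}) : (forall j, root r`_j a) ->
    r = ('X - a%:P)%:P * \poly_(j < size r) (r`_j %/ ('X - a%:P)).
  move=> r_line; apply/polyP => j; rewrite coefCM coef_poly.
  case: ltnP => j_lt; last by rewrite mulr0 nth_default.
  by rewrite mulrC divpK // dvdp_XsubCl.
move=> ncf p_line q_line.
have [c /polyC_inj XsubC_eq] := ncf _ _ _ (factor p p_line) (factor q q_line).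
by have := size_polyC_leq1 c; rewrite -XsubC_eq size_XsubC.
Qed.

Lemma no_common_line_z2 {p q b} : no_common_factor p q ->
  p.[b%:P] = 0 -> q.[b%:P] = 0 -> False.
Proof.
move=> ncf /eqP p_root /eqP q_root.
have [r p_eq] := factor_theorem _ _ p_root.
have [s q_eq] := factor_theorem _ _ q_root.
have [c XsubC_eq] := ncf _ r s (etrans p_eq (mulrC _ _)) (etrans q_eq (mulrC _ _)).
by have := size_polyC_leq1 c%:P; rewrite -XsubC_eq size_XsubC.
Qed.

(* Homogeneous coordinates of a point of C_oo in degree n: oo is [0 : 1], so
   its monomial vector only keeps the top-degree monomial, as in [ext_eval]. *)
Definition monomials n x i : C := if x is Some a then a ^+ i else (i == n)%:R.
Definition hscale n x : C := if x is Some a then a ^+ n else 1.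
Definition inv_conj x : C := if x is Some a then (a^*)^-1 else 0.

Lemma in_D_T_Dinv x : in_D x \/ in_T x \/ in_Dinv x.
Proof.
case: x => [a|] /=; last by auto.
by case: (real_ltgtP (normr_real a) (real1 C)); auto.
Qed.

Lemma outside_neq0 {x} : in_T x \/ in_Dinv x -> x != Some 0.
Proof.
case: x => [a|] //= a_out; rewrite (inj_eq (@Some_inj _)) -normr_gt0.
by case: a_out => [->|/(lt_trans ltr01)].
Qed.

Lemma hscale_neq0 n {x} : x != Some 0 -> hscale n x != 0.
Proof.
case: x => [a|] /=; last by rewrite oner_eq0.
by rewrite (inj_eq (@Some_inj _)); exact: expf_neq0.
Qed.

Lemma norm_inv_conj x : `|inv_conj x| = if x is Some a then `|a|^-1 else 0.
Proof. by case: x => [a|] /=; rewrite ?normr0 // normfV normcJ. Qed.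

Lemma norm_inv_conj_le1 {x} : in_T x \/ in_Dinv x -> `|inv_conj x| <= 1.
Proof.
rewrite norm_inv_conj; case: x => [a|] /=; last by rewrite ler01.
by case=> [->|a_gt1]; rewrite ?invr1 // invf_le1 ?ltW // (lt_trans ltr01).
Qed.

Lemma norm_inv_conj_eq1 x : `|inv_conj x| = 1 -> in_T x.
Proof.
rewrite norm_inv_conj; case: x => [a|] /= => [/(congr1 GRing.inv)|/eqP].
  by rewrite invrK invr1.
by rewrite eq_sym oner_eq0.
Qed.

Lemma inv_conj_unit a : `|a| = 1 -> inv_conj (Some a) = a.
Proof.
move=> a_norm; have a_neq0 : a != 0 by rewrite -normr_gt0 a_norm ltr01.
rewrite /= -[RHS](invrK a); congr (_^-1); apply: (mulfI a_neq0).
by rewrite -sqr_normc a_norm expr1n mulfV.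
Qed.

Lemma sum_mul_exp0 n (d : nat -> C) : \sum_(i < n.+1) d i * 0 ^+ i = d 0%N.
Proof.
rewrite big_ord_recl expr0 mulr1 big1 ?addr0 // => i _.
by rewrite expr0n mulr0.
Qed.

Lemma sum_mul_delta n (d : nat -> C) :
  \sum_(i < n.+1) d i * (i == n :> nat)%:R = d n.
Proof.
rewrite big_ord_recr /= eqxx mulr1 big1 ?add0r // => i _.
by rewrite ltn_eqF ?mulr0.
Qed.

Lemma bisum_exp0l n m f v :
  bisum n m f (GRing.exp 0) v = \sum_(j < m.+1) f 0%N j * v j.
Proof. by apply: eq_bigr => j _; rewrite (sum_mul_exp0 _ (f^~ j)). Qed.

Lemma bisum_exp0r n m f u :
  bisum n m f u (GRing.exp 0) = \sum_(i < n.+1) f i 0%N * u i.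
Proof. exact: (sum_mul_exp0 m (fun j => \sum_(i < n.+1) f i j * u i)). Qed.

Lemma bisum_monomials_infl n m f v :
  bisum n m f (monomials n None) v = \sum_(j < m.+1) f n j * v j.
Proof. by apply: eq_bigr => j _; rewrite (sum_mul_delta _ (f^~ j)). Qed.

Lemma bisum_monomials_infr n m f u :
  bisum n m f u (monomials m None) = \sum_(i < n.+1) f i m * u i.
Proof. exact: (sum_mul_delta m (fun j => \sum_(i < n.+1) f i j * u i)). Qed.

Lemma ext_eval_mk2 n m f x y :
  ext_eval n m (mk2 n m f) x y = bisum n m f (monomials n x) (monomials m y).
Proof.
case: x y => [a|] [b|] /=; rewrite ?eval2_mk2 //.
- rewrite bisum_exp0r bisum_monomials_infr.
  by apply: eq_bigr => i _; rewrite coef2_mk2 ltn_ord subn0 ltnSn.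
- rewrite bisum_exp0l bisum_monomials_infl.
  by apply: eq_bigr => j _; rewrite coef2_mk2 ltn_ord subn0 ltnSn.
- rewrite bisum_exp0l bisum_monomials_infl.
  rewrite (sum_mul_exp0 _ (fun j => _ j)) (sum_mul_delta _ (f n)).
  by rewrite /rev2 !coef2_mk2 !subn0 !ltnSn.
Qed.

Lemma monomials_rev n x i : x != Some 0 -> (i <= n)%N ->
  monomials n x (n - i) = hscale n x * (inv_conj x ^+ i)^*.
Proof.
case: x => [a|] /= x_neq0 i_le.
  have a_neq0 : a != 0 by apply: contraNneq x_neq0 => ->.
  rewrite rmorphXn /= [X in _ * X ^+ i](_ : _ = a^-1); last first.
    by rewrite fmorphV; congr (_^-1); exact: conjcK.
  by rewrite exprVn (exprB i_le) ?unitfE.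
rewrite mul1r expr0n rmorph_nat.
case: i i_le => [|i] i_le; first by rewrite subn0 eqxx.
by rewrite ltn_eqF // ltn_subrL (leq_ltn_trans _ i_le).
Qed.

Lemma sum_rev_conj n x (d : nat -> C) : x != Some 0 ->
  \sum_(i < n.+1) (d (n - i)%N)^* * monomials n x i =
  hscale n x * (\sum_(i < n.+1) d i * inv_conj x ^+ i)^*.
Proof.
move=> x_neq0; rewrite rmorph_sum mulr_sumr (reindex_inj rev_ord_inj) /=.
apply: eq_bigr => i _; rewrite subSS subKn ?leq_ord //.
by rewrite monomials_rev ?leq_ord // rmorphM mulrCA.
Qed.

Lemma bisum_refl n m f x y : x != Some 0 -> y != Some 0 ->
  bisum n m (fun i j => (f (n - i)%N (m - j)%N)^*) (monomials n x) (monomials m y) =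
  hscale n x * hscale m y *
    (bisum n m f (GRing.exp (inv_conj x)) (GRing.exp (inv_conj y)))^*.
Proof.
move=> x_neq0 y_neq0; pose D j := \sum_(i < n.+1) f i j * inv_conj x ^+ i.
transitivity (hscale n x * \sum_(j < m.+1) (D (m - j)%N)^* * monomials m y j).
  rewrite /bisum mulr_sumr; apply: eq_bigr => j _.
  by rewrite (sum_rev_conj _ _ (f^~ (m - j)%N)) // mulrA.
by rewrite sum_rev_conj // mulrA.
Qed.

Lemma ext_eval_refl n m p x y : has_bidegree p n m ->
  x != Some 0 -> y != Some 0 ->
  ext_eval n m (refl n m p) x y =
    hscale n x * hscale m y * (eval2 p (inv_conj x) (inv_conj y))^*.
Proof.
move=> p_bideg x_neq0 y_neq0.
by rewrite ext_eval_mk2 bisum_refl // -eval2_mk2 -(mk2_coef2 p_bideg).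
Qed.

Lemma refl_line_z1 {n m p a} : has_bidegree p n m -> `|a| = 1 ->
  (forall j, root p`_j a) -> forall j, root (refl n m p)`_j a.
Proof.
move=> p_bideg a_norm p_line j; rewrite root_coef_mk2; apply/implyP => j_lt.
have a_neq0 := @outside_neq0 (Some a) (or_introl a_norm).
move: (sum_rev_conj n _ (fun i => coef2 p i (m - j)%N) a_neq0).
rewrite inv_conj_unit // => /= ->.
have := p_line (m - j)%N; rewrite {1}(mk2_coef2 p_bideg) root_coef_mk2 ltnS leq_subr.
by move=> /eqP ->; rewrite rmorph0 mulr0.
Qed.

Lemma refl_line_z2 {n m p b} : has_bidegree p n m -> `|b| = 1 ->
  p.[b%:P] = 0 -> (refl n m p).[b%:P] = 0.
Proof.
move=> p_bideg b_norm p_root; rewrite horner_mk2C; apply/polyP => i.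
rewrite coef_poly coef0; case: ifP => // i_lt.
have b_neq0 := @outside_neq0 (Some b) (or_introl b_norm).
move: (sum_rev_conj m _ (fun j => coef2 p (n - i)%N j) b_neq0).
rewrite inv_conj_unit // => /= ->.
have := congr1 (fun q : {poly C} => q`_(n - i)) p_root.
rewrite {1}(mk2_coef2 p_bideg) horner_mk2C coef_poly coef0 ltnS leq_subr => /= ->.
by rewrite rmorph0 mulr0.
Qed.

Section SemiStable.
Context {n m : nat} {p : {poly {poly C}}}.
Hypothesis p_semi_stable : semi_stable n m p.

Lemma semi_stable_zero_closed_bidisk a b : `|a| <= 1 -> `|b| <= 1 ->
  eval2 p a b = 0 -> `|a| = 1 /\ `|b| = 1.
Proof.
have [p_bideg [zero_free ncf]] := p_semi_stable.
have p_eq := mk2_coef2 p_bideg.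
have zero_free_mk2 : zero_free_bidisk (mk2 n m (coef2 p)) by rewrite -p_eq.
rewrite !le_eqVlt => /orP[/eqP a_norm|a_lt1] /orP[/eqP b_norm|b_lt1] zero_ab //;
  exfalso; rewrite p_eq in zero_ab.
- have p_line : forall j, root p`_j a.
    by rewrite p_eq; exact: zero_free_line_z1 a b zero_free_mk2 a_norm b_lt1 zero_ab.
  exact: no_common_line_z1 ncf p_line (refl_line_z1 p_bideg a_norm p_line).
- have p_root : p.[b%:P] = 0.
    by rewrite p_eq; exact: zero_free_line_z2 a b zero_free_mk2 a_lt1 b_norm zero_ab.
  exact: no_common_line_z2 ncf p_root (refl_line_z2 p_bideg b_norm p_root).
- by move: (zero_free_mk2 _ _ a_lt1 b_lt1); rewrite zero_ab eqxx.
Qed.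

Lemma semi_stable_ext_zero_closed {x y} : ext_eval n m p x y = 0 ->
  in_D x \/ in_T x -> in_D y \/ in_T y -> in_T x /\ in_T y.
Proof.
case: x y => [a|] [b|] /= zero; try by [move=> [[]|[]] | move=> _ [[]|[]]].
move=> a_closed b_closed; apply: semi_stable_zero_closed_bidisk zero.
- by case: a_closed => [/ltW|->].
- by case: b_closed => [/ltW|->].
Qed.

Lemma semi_stable_refl_zero_outside {x y} : ext_eval n m (refl n m p) x y = 0 ->
  in_T x \/ in_Dinv x -> in_T y \/ in_Dinv y -> in_T x /\ in_T y.
Proof.
have [p_bideg _] := p_semi_stable.
move=> + x_out y_out; have x_neq0 := outside_neq0 x_out; have y_neq0 := outside_neq0 y_out.
rewrite ext_eval_refl // => /eqP.
rewrite !mulf_eq0 conjc_eq0 (negbTE (hscale_neq0 _ x_neq0)) (negbTE (hscale_neq0 _ y_neq0)).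
move=> /eqP zero; have [] := semi_stable_zero_closed_bidisk _ _
  (norm_inv_conj_le1 x_out) (norm_inv_conj_le1 y_out) zero.
by move=> /norm_inv_conj_eq1 ? /norm_inv_conj_eq1.
Qed.

End SemiStable.

End Bivariate.

Theorem lemma10p1 (R : realType) (n m : nat) (p : {poly {poly R[i]}}) :
  semi_stable n m p ->
  forall x y : option R[i],
    ext_eval n m p x y = 0 -> ext_eval n m (refl n m p) x y = 0 ->
    (in_D x /\ in_Dinv y) \/ (in_T x /\ in_T y) \/ (in_Dinv x /\ in_D y).
Proof.
move=> p_ss x y p_zero refl_zero.
have zero_closed := semi_stable_ext_zero_closed p_ss p_zero.
have refl_zero_outside := semi_stable_refl_zero_outside p_ss refl_zero.
have [Dx|[Tx|Ix]] := in_D_T_Dinv x; have [Dy|[Ty|Iy]] := in_D_T_Dinv y;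
  first [by left | by right; right | right; left].
all: first [by apply: zero_closed; tauto | by apply: refl_zero_outside; tauto].
Qed.
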